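(* Let $ABC$ be a triangle with incenter $I$ and circumcenter $O$, and let $P$ be a point on line $IO$. Let $A', B', C'$ be the feet of the perpendiculars from $P$ to $AI, BI, CI$ respectively. Then the Steiner line of $P$ with respect to triangle $A'B'C'$ is the Euler line of triangle $A'B'C'$.
   Context: The points $A', B', C'$ and $P$ lie on the circle with diameter $PI$, i.e. $P$ lies on the circumcircle of $A'B'C'$. For a point $X$ on the circumcircle of a triangle, the reflections of $X$ over the three sidelines are collinear; the line containing them is the Steiner line of $X$ with respect to the triangle. *)

From mathcomp Require Import all_boot all_order all_algebra.
Set Implicit Arguments. Unset Strict Implicit. Unset Printing Implicit Defensive.
Import Order.TTheory GRing.Theory Num.Theory.
Local Open Scope ring_scope.

Section PlaneGeometry.
Variable R : realFieldType.
Definition point := (R * R)%type.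

Definition padd (u v : point) : point := (u.1 + v.1, u.2 + v.2).
Definition psub (u v : point) : point := (u.1 - v.1, u.2 - v.2).
Definition pscale (k : R) (u : point) : point := (k * u.1, k * u.2).
Definition dot (u v : point) : R := u.1 * v.1 + u.2 * v.2.
Definition cross (u v : point) : R := u.1 * v.2 - u.2 * v.1.
Definition sqdist (X Y : point) : R := dot (psub X Y) (psub X Y).

Definition collinear (A B C : point) : Prop := cross (psub B A) (psub C A) = 0.

(* Z lies on the line through X and Y (meaningful when X <> Y) *)
Definition on_line (X Y Z : point) : Prop := cross (psub Y X) (psub Z X) = 0.

(* foot of the perpendicular from P to the line XY (X <> Y) *)
Definition foot (P X Y : point) : point :=
  padd X (pscale (dot (psub P X) (psub Y X) / dot (psub Y X) (psub Y X)) (psub Y X)).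

Definition reflection (P X Y : point) : point :=
  psub (pscale 2 (foot P X Y)) P.

Definition sqdist_line (Z X Y : point) : R :=
  (cross (psub Y X) (psub Z X)) ^+ 2 / dot (psub Y X) (psub Y X).

Definition is_circumcenter (O A B C : point) : Prop :=
  sqdist O A = sqdist O B /\ sqdist O B = sqdist O C.

Definition is_incenter (I A B C : point) : Prop :=
  (exists a b c : R, [/\ 0 < a, 0 < b, 0 < c, a + b + c = 1 &
      I = padd (pscale a A) (padd (pscale b B) (pscale c C))]) /\
  sqdist_line I A B = sqdist_line I B C /\ sqdist_line I B C = sqdist_line I C A.

Definition centroid (A B C : point) : point :=
  pscale (1 / 3%:R) (padd A (padd B C)).

End PlaneGeometry.

(* Work in complex coordinates centred at the incenter I, writing z^* for the
   conjugate of z.  If the incircle, of radius r, touches the sides at d_a, d_b,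
   d_c, then A is the intersection 2 d_b d_c / (d_b + d_c) of the tangents at
   d_b and d_c, so the line IA is encoded by the unit number
   e_A := A / A^* = d_b d_c / r^2.  Computing the circumcenter O explicitly gives
   O^* s2 = O s1, where s1, s2 are the elementary symmetric functions of
   e_A, e_B, e_C; hence P^* s2 = P s1 for every P on IO.  The feet
   A' = (P + P^* e_A) / 2, ... lie on the circle with diameter IP, so O' = P / 2
   and G = P / 2 + P^* s1 / 6.  The reflection Ra of P in B'C' satisfies
   Ra - O' = k (G - O') with k = 3 e_A (e_B^2 + e_B e_C + e_C^2) / (s1 s2),
   which is real because e^* = 1 / e exchanges s1 and s2 up to the factor
   e_A e_B e_C: Ra lies on the Euler line O'G.  Finally Ra = Rb forces
   P = P^* e_C and Rb = Rc forces P = P^* e_A, contradicting e_A <> e_C. *)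

From HB Require Import structures.
From mathcomp Require Import all_boot all_order all_algebra.
From mathcomp Require Import ring complex.
Set Implicit Arguments. Unset Strict Implicit. Unset Printing Implicit Defensive.
Import Order.TTheory GRing.Theory Num.Theory.
Local Open Scope ring_scope.
Local Open Scope complex_scope.

Lemma eq_lincomb2 (T : comPzRingType) (x y l1 r1 l2 r2 k1 k2 : T) :
  x - y = k1 * (l1 - r1) + k2 * (l2 - r2) -> l1 = r1 -> l2 = r2 -> x = y.
Proof. by move=> E e1 e2; apply/eqP; rewrite -subr_eq0 E e1 e2 !subrr !mulr0 addr0. Qed.

Section ComplexConjugation.
Variable R : realFieldType.
Local Notation C := R[i].

Definition complex_conj (z : C) : C := conjc z.

Lemma complex_conj_zmod_morphism : zmod_morphism complex_conj.
Proof. by case=> a b [c d] /=; rewrite !opprD. Qed.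

Lemma complex_conj_monoid_morphism : monoid_morphism complex_conj.
Proof.
split; first by rewrite /= oppr0.
by case=> a b [c d] /=; congr (_ +i* _); ring.
Qed.

HB.instance Definition _ :=
  GRing.isZmodMorphism.Build C C complex_conj complex_conj_zmod_morphism.
HB.instance Definition _ :=
  GRing.isMonoidMorphism.Build C C complex_conj complex_conj_monoid_morphism.

(* [conjc] is declared a ring morphism only over an rcfType; [cconj] makes it
   one over any real field, as an [rmorphism] constant so that the generic
   morphism lemmas rewrite it. *)
Definition cconj : {rmorphism C -> C} := GRing.RMorphism.clone _ _ complex_conj _.

Lemma cconjK : involutive cconj.
Proof. by case=> a b /=; rewrite opprK. Qed.

Definition phase (z : C) : C := z / cconj z.

Lemma cconj_phase (z : C) : cconj (phase z) = (phase z)^-1.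
Proof. by rewrite fmorph_div cconjK invf_div. Qed.

Lemma natC_neq0 n : (n.+1%:R : C) != 0.
Proof. by rewrite -(rmorph_nat (real_complex R)) fmorph_eq0 pnatr_eq0. Qed.

End ComplexConjugation.

Arguments cconj {R}.
Arguments natC_neq0 {R} n.

Section ComplexCoordinates.
Variable R : realFieldType.
Local Notation C := R[i].
Local Notation point := (point R).

Definition cvec (u : point) : C := (u.1 +i* u.2).

Definition affix (O X : point) : C := cvec (psub X O).

Lemma affix_origin (O : point) : affix O O = 0.
Proof. by rewrite /affix /cvec /= !subrr. Qed.

Lemma affixB (O X Y : point) : affix O X - affix O Y = cvec (psub X Y).
Proof. by rewrite /affix /cvec /=; congr (_ +i* _); ring. Qed.

Lemma affix_inj (O : point) : injective (affix O).
Proof. by case: O => o1 o2 [x1 x2] [y1 y2] [/addIr-> /addIr->]. Qed.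

Lemma affix_padd (O X : point) (u : point) : affix O (padd X u) = affix O X + cvec u.
Proof. by rewrite /affix /cvec /=; congr (_ +i* _); ring. Qed.

Lemma cvecZ (k : R) (u : point) : cvec (pscale k u) = k%:C * cvec u.
Proof. by rewrite /cvec /=; congr (_ +i* _); ring. Qed.

Lemma dot_cvec (u v : point) :
  (dot u v)%:C = (cvec u * cconj (cvec v) + cconj (cvec u) * cvec v) / 2.
Proof.
apply: (mulfI (natC_neq0 1)); rewrite [RHS]mulrC divfK ?(natC_neq0 1) //.
rewrite -(rmorph_nat (real_complex R)) -rmorphM /dot /cvec /=.
by congr (_ +i* _); ring.
Qed.

Lemma dot_cvec_self (u : point) : (dot u u)%:C = cvec u * cconj (cvec u).
Proof. by rewrite /dot /cvec /=; congr (_ +i* _); ring. Qed.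

Lemma cross_cvec (u v : point) :
  cconj (cvec u) * cvec v - cvec u * cconj (cvec v) = (0 +i* (2 * cross u v)).
Proof. by rewrite /cross /cvec /=; congr (_ +i* _); ring. Qed.

Lemma cross_eq0_cvec (u v : point) :
  cross u v = 0 <-> cconj (cvec u) * cvec v = cvec u * cconj (cvec v).
Proof.
split=> [uv0 | /eqP].
  by apply/eqP; rewrite -subr_eq0 cross_cvec uv0 mulr0.
by rewrite -subr_eq0 cross_cvec => /eqP[/eqP]; rewrite mulf_eq0 pnatr_eq0 => /eqP.
Qed.

Variable O : point.

Lemma sqdist_affix (X Y : point) :
  (sqdist X Y)%:C = (affix O X - affix O Y) * cconj (affix O X - affix O Y).
Proof. by rewrite affixB dot_cvec_self. Qed.

Lemma collinear_affix (X Y Z : point) :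
  collinear X Y Z <->
  cconj (affix O Y - affix O X) * (affix O Z - affix O X) =
  (affix O Y - affix O X) * cconj (affix O Z - affix O X).
Proof. by rewrite !affixB; exact: cross_eq0_cvec. Qed.

Lemma affix_sub_neq0 (X Y : point) : X <> Y -> affix O Y - affix O X != 0.
Proof. by move=> XY; rewrite subr_eq0; apply/eqP => /affix_inj /esym. Qed.

Lemma affix_foot (P X Y : point) : X <> Y ->
  affix O (foot P X Y) = affix O X + ((affix O P - affix O X) +
    cconj (affix O P - affix O X) *
    ((affix O Y - affix O X) / cconj (affix O Y - affix O X))) / 2.
Proof.
move=> XY; have := affix_sub_neq0 XY; rewrite affixB => YX0.
(* [fmorph_div] restated with [%:C], so that [dot_cvec] matches its output *)
rewrite /foot affix_padd cvecZ (fmorph_div _ _ _ : (_ / _)%:C = _%:C / _%:C).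
rewrite dot_cvec_self dot_cvec !affixB.
by field; rewrite YX0 fmorph_eq0 YX0 (natC_neq0 1).
Qed.

Lemma affix_reflection (P X Y : point) : X <> Y ->
  affix O (reflection P X Y) = affix O X + cconj (affix O P - affix O X) *
    ((affix O Y - affix O X) / cconj (affix O Y - affix O X)).
Proof.
move=> XY; have -> : affix O (reflection P X Y) = 2 * affix O (foot P X Y) - affix O P.
  by rewrite /affix /cvec /=; congr (_ +i* _); ring.
rewrite affix_foot //; field.
by rewrite -rmorphB fmorph_eq0 affix_sub_neq0 // (natC_neq0 1).
Qed.

Lemma affix_centroid (X Y Z : point) :
  affix O (centroid X Y Z) = (affix O X + affix O Y + affix O Z) / 3.
Proof.
apply: (mulfI (natC_neq0 2)); rewrite [RHS]mulrC divfK ?(natC_neq0 2) //.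
rewrite -(rmorph_nat (real_complex R)) -cvecZ /affix /cvec /=.
by congr (_ +i* _); field.
Qed.

End ComplexCoordinates.

Section Feet.
Variable R : realFieldType.
Local Notation point := (point R).

Lemma sqdist_neq0 (X Y : point) : X <> Y -> sqdist Y X != 0.
Proof.
move=> XY; apply: contra_neq (_ : (sqdist Y X)%:C != 0) => [-> //|].
by rewrite (sqdist_affix X) mulf_neq0 ?fmorph_eq0 // affix_sub_neq0.
Qed.

Lemma foot_sym (P X Y : point) : X <> Y -> foot P X Y = foot P Y X.
Proof.
move=> XY; have := sqdist_neq0 XY; have := sqdist_neq0 (nesym XY).
case: P X Y {XY} => [p1 p2] [x1 x2] [y1 y2].
rewrite /foot /sqdist /dot /padd /pscale /psub /= => YX0 XY0.
by congr pair; field.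
Qed.

Lemma sqdist_foot (P X Y : point) : X <> Y -> sqdist (foot P X Y) P = sqdist_line P X Y.
Proof.
move=> XY; have := sqdist_neq0 XY.
case: P X Y {XY} => [p1 p2] [x1 x2] [y1 y2].
rewrite /foot /sqdist_line /sqdist /cross /dot /padd /pscale /psub /= => XY0.
by field.
Qed.

Lemma dot_foot (P X Y : point) : X <> Y ->
  dot (psub X P) (psub (foot P X Y) P) = sqdist (foot P X Y) P.
Proof.
move=> XY; have := sqdist_neq0 XY.
case: P X Y {XY} => [p1 p2] [x1 x2] [y1 y2].
rewrite /foot /sqdist /dot /padd /pscale /psub /= => XY0.
by field.
Qed.

End Feet.

Section Incircle.
Variable R : realFieldType.
Local Notation C := R[i].
Local Notation point := (point R).

(* [x] lies on the line through [d] perpendicular to [d]. *)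
Definition on_tangent (d x : C) : Prop := x * cconj d + cconj x * d = 2 * (d * cconj d).

Lemma foot_tangency (I X Y : point) : X <> Y ->
  let d := affix I (foot I X Y) in
  [/\ d * cconj d = (sqdist_line I X Y)%:C, on_tangent d (affix I X) & on_tangent d (affix I Y)].
Proof.
move=> XY d.
have dd : d * cconj d = (sqdist (foot I X Y) I)%:C.
  by rewrite (sqdist_affix I) affix_origin subr0.
have tangent Z W : Z <> W -> foot I Z W = foot I X Y -> on_tangent d (affix I Z).
  move=> ZW eF; rewrite /on_tangent dd -eF -(dot_foot I ZW) eF dot_cvec.
  rewrite -/(affix I Z) -/(affix I (foot I X Y)) -/d.
  by field; rewrite (natC_neq0 1).
split; first by rewrite dd sqdist_foot.
  exact: tangent XY _.
exact: tangent (nesym XY) (foot_sym _ (nesym XY)).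
Qed.

Lemma tangent_points_add_neq0 (u v x : C) :
  u != 0 -> on_tangent u x -> on_tangent v x -> u + v != 0.
Proof.
move=> u0 Hu Hv; rewrite addrC addr_eq0; apply/eqP => ev.
move: Hv; rewrite ev /on_tangent rmorphN => Hv.
have : 4 * (u * cconj u) = 0 by apply: (eq_lincomb2 (k1 := -1) (k2 := -1) _ Hu Hv); ring.
by apply/eqP; rewrite !mulf_neq0 ?fmorph_eq0 ?(natC_neq0 3).
Qed.

Lemma on_tangent_collinear (u x y z : C) : u != 0 ->
  on_tangent u x -> on_tangent u y -> on_tangent u z ->
  cconj (y - x) * (z - x) = (y - x) * cconj (z - x).
Proof.
move=> u0 Hx Hy Hz.
have conj_on w : on_tangent u w -> cconj w = (2 * (u * cconj u) - w * cconj u) / u.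
  by rewrite /on_tangent => <-; field.
by rewrite !rmorphB (conj_on x) // (conj_on y) // (conj_on z) //; field.
Qed.

Lemma tangents_meet (s u v x : C) : s != 0 -> u * cconj u = s -> v * cconj v = s ->
  u + v != 0 -> u != v -> on_tangent u x -> on_tangent v x ->
  x = 2 * u * v / (u + v) /\ cconj x = 2 * s / (u + v).
Proof.
move=> s0 us vs uv0 neq_uv; rewrite /on_tangent us vs.
have u0 : u != 0 by apply: contra_neq s0 => u0; rewrite -us u0 mul0r.
have v0 : v != 0 by apply: contra_neq s0 => v0; rewrite -vs v0 mul0r.
have -> : cconj u = s / u by rewrite -us; field.
have -> : cconj v = s / v by rewrite -vs; field.
have uv1 : u - v != 0 by rewrite subr_eq0.
have vu1 : v - u != 0 by rewrite subr_eq0 eq_sym.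
have vu0 : v + u != 0 by rewrite addrC.
move=> Hu Hv; split.
  (* eliminate [cconj x] between the two tangent equations, then [x] *)
  apply: (eq_lincomb2 (k1 := u * v ^+ 2 / (s * (v - u) * (v + u)))
                      (k2 := - (u ^+ 2 * v) / (s * (v - u) * (v + u))) _ Hu Hv).
  by field; rewrite ?uv0 ?vu0 ?uv1 ?vu1 ?s0 ?u0 ?v0.
apply: (eq_lincomb2 (k1 := u / ((u - v) * (u + v))) (k2 := - v / ((u - v) * (u + v))) _ Hu Hv).
by field; rewrite ?uv0 ?vu0 ?uv1 ?vu1 ?s0 ?u0 ?v0.
Qed.

Lemma equidistant_unique (a b c ca cb cc o co o' co' : C) :
  (o - a) * (co - ca) = (o - b) * (co - cb) -> (o - b) * (co - cb) = (o - c) * (co - cc) ->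
  (o' - a) * (co' - ca) = (o' - b) * (co' - cb) -> (o' - b) * (co' - cb) = (o' - c) * (co' - cc) ->
  (cb - ca) * (c - a) - (b - a) * (cc - ca) != 0 -> o = o' /\ co = co'.
Proof.
move=> E1 E2 E1' E2' det0.
have L1 : (o - o') * (cb - ca) + (co - co') * (b - a) = 0.
  by apply: (eq_lincomb2 (k1 := 1) (k2 := -1) _ E1 E1'); ring.
have L2 : (o - o') * (cc - cb) + (co - co') * (c - b) = 0.
  by apply: (eq_lincomb2 (k1 := 1) (k2 := -1) _ E2 E2'); ring.
have Lo : (o - o') * ((cb - ca) * (c - a) - (b - a) * (cc - ca)) = 0.
  by apply: (eq_lincomb2 (k1 := c - b) (k2 := - (b - a)) _ L1 L2); ring.
have Lco : (co - co') * ((cb - ca) * (c - a) - (b - a) * (cc - ca)) = 0.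
  by apply: (eq_lincomb2 (k1 := - (cc - cb)) (k2 := cb - ca) _ L1 L2); ring.
move/eqP: Lo; move/eqP: Lco; rewrite !mulf_eq0 (negPf det0) !orbF !subr_eq0.
by move=> /eqP -> /eqP ->.
Qed.

(* The incircle is centred at 0 with squared radius [s]; it touches the sides
   opposite the vertices [a], [b], [c] at [da], [db], [dc]. *)
Variables (s da db dc a b c : C).
Hypotheses (s0 : s != 0) (da_s : da * cconj da = s) (db_s : db * cconj db = s)
  (dc_s : dc * cconj dc = s).
Hypotheses (a_db : on_tangent db a) (a_dc : on_tangent dc a) (b_dc : on_tangent dc b)
  (b_da : on_tangent da b) (c_da : on_tangent da c) (c_db : on_tangent db c).
Hypothesis abc : cconj (b - a) * (c - a) != (b - a) * cconj (c - a).

Let d_neq0 d : d * cconj d = s -> d != 0.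
Proof. by move=> ds; apply: contra_neq s0 => d0; rewrite -ds d0 mul0r. Qed.

Let da0 := d_neq0 da_s.
Let db0 := d_neq0 db_s.
Let dc0 := d_neq0 dc_s.
Let add_dadb : da + db != 0 := tangent_points_add_neq0 da0 c_da c_db.
Let add_dbdc : db + dc != 0 := tangent_points_add_neq0 db0 a_db a_dc.
Let add_dcda : dc + da != 0 := tangent_points_add_neq0 dc0 b_dc b_da.

Let neq_dadb : da != db.
Proof.
apply: contra_neq abc => e; move: b_da; rewrite e => b_db.
exact: on_tangent_collinear db0 a_db b_db c_db.
Qed.

Let neq_dbdc : db != dc.
Proof.
apply: contra_neq abc => e; move: c_db; rewrite e => c_dc.
exact: on_tangent_collinear dc0 a_dc b_dc c_dc.
Qed.

Let neq_dcda : dc != da.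
Proof.
apply: contra_neq abc => e; move: a_dc; rewrite e => a_da.
exact: on_tangent_collinear da0 a_da b_da c_da.
Qed.

Let vertex_a := tangents_meet s0 db_s dc_s add_dbdc neq_dbdc a_db a_dc.
Let vertex_b := tangents_meet s0 dc_s da_s add_dcda neq_dcda b_dc b_da.
Let vertex_c := tangents_meet s0 da_s db_s add_dadb neq_dadb c_da c_db.

Lemma incircle_vertices_neq0 : [/\ a != 0, b != 0 & c != 0].
Proof.
case: vertex_a vertex_b vertex_c => [-> _] [-> _] [-> _].
by split; rewrite !mulf_neq0 ?invr_neq0 ?(natC_neq0 1).
Qed.

Let phase_vertex u v x : u + v != 0 ->
  x = 2 * u * v / (u + v) /\ cconj x = 2 * s / (u + v) -> phase x = u * v / s.
Proof.
move=> uv0 [ex cx]; rewrite /phase cx ex.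
by field; rewrite s0 uv0 (natC_neq0 1).
Qed.

Let phase_a : phase a = db * dc / s := phase_vertex add_dbdc vertex_a.
Let phase_b : phase b = dc * da / s := phase_vertex add_dcda vertex_b.
Let phase_c : phase c = da * db / s := phase_vertex add_dadb vertex_c.

Let neq_scaled u v w : w != 0 -> u != v -> u * w / s != w * v / s.
Proof.
move=> w0; apply: contra_neq => e.
by apply: (mulIf w0); apply: (mulIf (invr_neq0 s0)); rewrite e [w * v]mulrC.
Qed.

Lemma incircle_phases_distinct : [/\ phase a != phase b, phase b != phase c & phase c != phase a].
Proof.
rewrite phase_a phase_b phase_c.
by split; apply: neq_scaled; rewrite // eq_sym.
Qed.

Lemma incircle_circumcenter_axis o :
  (o - a) * cconj (o - a) = (o - b) * cconj (o - b) ->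
  (o - b) * cconj (o - b) = (o - c) * cconj (o - c) -> o != 0 ->
  let sigma1 := phase a + phase b + phase c in
  let sigma2 := phase a * phase b + phase b * phase c + phase c * phase a in
  [/\ sigma1 != 0, sigma2 != 0 & cconj o * sigma2 = o * sigma1].
Proof.
move=> Ea Eb o0 sigma1 sigma2.
have det : (cconj b - cconj a) * (c - a) - (b - a) * (cconj c - cconj a) != 0.
  by rewrite subr_eq0 -!rmorphB.
rewrite !rmorphB in Ea Eb.
case: vertex_a vertex_b vertex_c => [ea ca] [eb cb] [ec cc].
have [ho hco] : o = 2 * da * db * dc * (da + db + dc) / ((da + db) * (db + dc) * (dc + da)) /\
    cconj o = 2 * s * (da * db + db * dc + dc * da) / ((da + db) * (db + dc) * (dc + da)).
  apply: (equidistant_unique Ea Eb _ _ det); rewrite ?ca ?cb ?cc ?ea ?eb ?ec.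
    by field; rewrite add_dadb add_dbdc add_dcda.
  by field; rewrite add_dadb add_dbdc add_dcda.
have sum0 : da + db + dc != 0.
  by apply: contra_neq o0 => e; rewrite ho e mulr0 mul0r.
have sum2_0 : da * db + db * dc + dc * da != 0.
  have : cconj o != 0 by rewrite fmorph_eq0.
  by rewrite hco; apply: contra_neq => ->; rewrite mulr0 mul0r.
have -> : sigma1 = (da * db + db * dc + dc * da) / s.
  by rewrite /sigma1 phase_a phase_b phase_c; field.
have -> : sigma2 = da * db * dc * (da + db + dc) / s ^+ 2.
  by rewrite /sigma2 phase_a phase_b phase_c; field.
split; rewrite ?mulf_neq0 ?invr_neq0 ?expf_neq0 //.
by rewrite hco ho; field; rewrite s0 add_dadb add_dbdc add_dcda.
Qed.

End Incircle.

Section PedalTriangle.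
Variable R : realFieldType.
Local Notation C := R[i].

Definition on_unit_circle (e : C) : Prop := e * cconj e = 1.

Definition pedal (p e : C) : C := (p + cconj p * e) / 2.

Lemma unit_circle_neq0 e : on_unit_circle e -> e != 0.
Proof. by move=> ue; apply: contra_neq (oner_neq0 C) => e0; rewrite -ue e0 mul0r. Qed.

Lemma unit_circle_conj e : on_unit_circle e -> cconj e = e^-1.
Proof. by move=> ue; apply: (mulfI (unit_circle_neq0 ue)); rewrite ue mulfV ?unit_circle_neq0. Qed.

Lemma phase_on_unit_circle z : z != 0 -> on_unit_circle (phase z).
Proof.
by move=> z0; rewrite /on_unit_circle cconj_phase mulfV // mulf_neq0 ?invr_neq0 ?fmorph_eq0.
Qed.

Lemma cconj_pedal p e : on_unit_circle e -> cconj (pedal p e) = (cconj p + p / e) / 2.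
Proof.
by move=> ue; rewrite fmorph_div rmorphD rmorphM cconjK rmorph_nat (unit_circle_conj ue).
Qed.

Definition pedal_mirror (p ex ey : C) : C :=
  (p + cconj p * (ex + ey) - cconj p ^+ 2 * ex * ey / p) / 2.

Lemma pedal_mirrorE p ex ey : p != 0 ->
  on_unit_circle ex -> on_unit_circle ey -> ex != ey ->
  let x := pedal p ex in let y := pedal p ey in
  x + cconj (p - x) * ((y - x) / cconj (y - x)) = pedal_mirror p ex ey.
Proof.
move=> p0 ux uy exy x y.
have ex0 := unit_circle_neq0 ux; have ey0 := unit_circle_neq0 uy.
have exy' : ex - ey != 0 by rewrite subr_eq0.
rewrite {}/x {}/y.
have -> : cconj (pedal p ey - pedal p ex) = p * (ex - ey) / (2 * ex * ey).
  by rewrite rmorphB !cconj_pedal //; field; rewrite ex0 ey0 (natC_neq0 1).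
rewrite rmorphB cconj_pedal // /pedal /pedal_mirror.
by field; rewrite ex0 ey0 p0 exy' (natC_neq0 1).
Qed.


Lemma collinear_real_ratio (o g r k : C) : cconj k = k -> r - o = k * (g - o) ->
  cconj (g - o) * (r - o) = (g - o) * cconj (r - o).
Proof. by move=> kk ->; rewrite rmorphM kk; ring. Qed.

Variables (p ea eb ec : C).
Hypotheses (p0 : p != 0) (ua : on_unit_circle ea) (ub : on_unit_circle eb)
  (uc : on_unit_circle ec) (eab : ea != eb) (ebc : eb != ec) (eca : ec != ea).

Local Notation a := (pedal p ea).
Local Notation b := (pedal p eb).
Local Notation c := (pedal p ec).

Let ea0 := unit_circle_neq0 ua.
Let eb0 := unit_circle_neq0 ub.
Let ec0 := unit_circle_neq0 uc.

Lemma pedal_circumcenter o :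
  (o - a) * cconj (o - a) = (o - b) * cconj (o - b) ->
  (o - b) * cconj (o - b) = (o - c) * cconj (o - c) -> o = p / 2.
Proof.
rewrite !rmorphB => Ea Eb.
have det : (cconj b - cconj a) * (c - a) - (b - a) * (cconj c - cconj a) != 0.
  have -> : (cconj b - cconj a) * (c - a) - (b - a) * (cconj c - cconj a) =
      - (p * cconj p * (ea - eb) * (eb - ec) * (ec - ea) / (4 * ea * eb * ec)).
    by rewrite !cconj_pedal // /pedal; field; rewrite ea0 eb0 ec0 (natC_neq0 3) (natC_neq0 1).
  have e40 : 4 * ea * eb * ec != 0 by rewrite !mulf_neq0 ?(natC_neq0 3).
  by rewrite oppr_eq0 !mulf_neq0 ?invr_neq0 ?fmorph_eq0 ?subr_eq0.
suff : o = p / 2 /\ cconj o = cconj p / 2 by case.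
apply: (equidistant_unique Ea Eb _ _ det); rewrite !cconj_pedal // /pedal.
  by field; rewrite ea0 eb0 (natC_neq0 1).
by field; rewrite eb0 ec0 (natC_neq0 1).
Qed.

Lemma pedal_reflections_not_all_equal :
  ~ (pedal_mirror p eb ec = pedal_mirror p ec ea /\ pedal_mirror p ec ea = pedal_mirror p ea eb).
Proof.
have cp0 : cconj p != 0 by rewrite fmorph_eq0.
have coincide ex ey ez :
    ex != ey -> pedal_mirror p ey ez = pedal_mirror p ez ex -> p = cconj p * ez.
  move=> exy E; apply/eqP; rewrite -subr_eq0.
  have : cconj p * (ey - ex) * (p - cconj p * ez) =
      2 * p * (pedal_mirror p ey ez - pedal_mirror p ez ex).
    by rewrite /pedal_mirror; field; rewrite p0 (natC_neq0 1).
  have yx0 : ey - ex != 0 by rewrite subr_eq0 eq_sym.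
  by rewrite E subrr mulr0 => /eqP; rewrite !mulf_eq0 (negPf cp0) (negPf yx0).
case=> /(coincide _ _ _ eab) Ec /(coincide _ _ _ ebc) Ea.
by move: eca; rewrite (mulfI cp0 (etrans (esym Ec) Ea)) eqxx.
Qed.

Lemma pedal_mirror_on_euler_line (ex ey ez s1 s2 : C) :
  on_unit_circle ex -> on_unit_circle ey -> on_unit_circle ez ->
  s1 = ex + ey + ez -> s2 = ex * ey + ey * ez + ez * ex ->
  s1 != 0 -> s2 != 0 -> cconj p * s2 = p * s1 ->
  let o := p / 2 in let g := o + cconj p * s1 / 6 in
  cconj (g - o) * (pedal_mirror p ey ez - o) = (g - o) * cconj (pedal_mirror p ey ez - o).
Proof.
move=> ux uy uz hs1 hs2 s10 s20 hp o g.
have ex0 := unit_circle_neq0 ux; have ey0 := unit_circle_neq0 uy; have ez0 := unit_circle_neq0 uz.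
have cx := unit_circle_conj ux; have cy := unit_circle_conj uy; have cz := unit_circle_conj uz.
(* [cconj] exchanges [s1] and [s2] up to the factor [ex * ey * ez], so the
   ratio [k] below is real. *)
have cs1 : cconj s1 = s2 / (ex * ey * ez).
  by rewrite hs1 hs2 !rmorphD cx cy cz; field; rewrite ex0 ey0 ez0.
have cs2 : cconj s2 = s1 / (ex * ey * ez).
  by rewrite hs1 hs2 !rmorphD !rmorphM cx cy cz; field; rewrite ex0 ey0 ez0.
apply: (collinear_real_ratio (k := 3 * ex * (ey ^+ 2 + ey * ez + ez ^+ 2) / (s1 * s2))).
  rewrite fmorph_div !rmorphM rmorph_nat !rmorphD !rmorphXn !rmorphM cs1 cs2 cx cy cz.
  by field; rewrite ex0 ey0 ez0 s10 s20.
have cp : cconj p = p * s1 / s2 by rewrite -hp; field.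
rewrite /g /o /pedal_mirror cp hs1 hs2 in s10 s20 *.
by field; rewrite p0 s10 s20 (natC_neq0 1) (natC_neq0 5).
Qed.

End PedalTriangle.

Section Points.
Variable R : realFieldType.
Local Notation C := R[i].
Local Notation point := (point R).

Lemma affix_neq0 (O X : point) : X <> O -> affix O X != 0.
Proof. by move=> XO; have := affix_sub_neq0 O (nesym XO); rewrite affix_origin subr0. Qed.

Lemma affix_foot_origin (O P X : point) : X <> O ->
  affix O (foot P X O) = pedal (affix O P) (phase (affix O X)).
Proof.
move=> XO; have x0 := affix_neq0 XO.
rewrite affix_foot // affix_origin /pedal /phase !rmorphB rmorph0.
by field; rewrite oppr_eq0 fmorph_eq0 x0 (natC_neq0 1).
Qed.

Lemma noncollinear_neq (A B C : point) : ~ collinear A B C -> [/\ A <> B, B <> C & C <> A].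
Proof. by move=> ABC; split=> E; apply: ABC; rewrite /collinear E /cross /=; ring. Qed.

Lemma incenter_off_sideline (I A B C : point) :
  is_incenter I A B C -> ~ collinear A B C -> sqdist_line I A B != 0.
Proof.
case=> [[x [y [z [_ _ z0 xyz ->]]]] _] ABC; have [AB _ _] := noncollinear_neq ABC.
rewrite /sqdist_line mulf_neq0 ?invr_neq0 ?sqdist_neq0 // expf_neq0 //.
have -> : x = 1 - y - z by rewrite -xyz; ring.
have -> : cross (psub B A) (psub (padd (pscale (1 - y - z) A) (padd (pscale y B) (pscale z C))) A)
    = z * cross (psub B A) (psub C A).
  by rewrite /cross /=; ring.
by rewrite mulf_neq0 ?(lt0r_neq0 z0) //; apply/eqP; exact: ABC.
Qed.

Lemma incenter_circumcenter_axis (A B C I O : point) :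
  ~ collinear A B C -> is_incenter I A B C -> is_circumcenter O A B C -> O <> I ->
  let e X := phase (affix I X) in
  let sigma1 := e A + e B + e C in
  let sigma2 := e A * e B + e B * e C + e C * e A in
  [/\ [/\ A <> I, B <> I & C <> I], [/\ e A != e B, e B != e C & e C != e A]
    & [/\ sigma1 != 0, sigma2 != 0 & cconj (affix I O) * sigma2 = affix I O * sigma1]].
Proof.
move=> ABC inc [OAB OBC] OI e sigma1 sigma2.
have [AB BC CA] := noncollinear_neq ABC.
have s0 : (sqdist_line I A B)%:C != 0 by rewrite fmorph_eq0 (incenter_off_sideline inc ABC).
have [dc_s a_dc b_dc] := foot_tangency I AB.
have [da_s b_da c_da] := foot_tangency I BC.
have [db_s c_db a_db] := foot_tangency I CA.
case: inc => _ [eAB eBC]; rewrite -eAB in da_s; rewrite -eBC -eAB in db_s.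
have abc : cconj (affix I B - affix I A) * (affix I C - affix I A) !=
    (affix I B - affix I A) * cconj (affix I C - affix I A).
  by apply/eqP => /(collinear_affix I).
have [a0 b0 c0] := incircle_vertices_neq0 s0 da_s db_s dc_s a_db a_dc b_dc b_da c_da c_db abc.
split.
- by split=> E; [move: a0 | move: b0 | move: c0]; rewrite E affix_origin eqxx.
- exact: incircle_phases_distinct s0 da_s db_s dc_s a_db a_dc b_dc b_da c_da c_db abc.
apply: (incircle_circumcenter_axis s0 da_s db_s dc_s a_db a_dc b_dc b_da c_da c_db abc).
- by rewrite -!(sqdist_affix I) OAB.
- by rewrite -!(sqdist_affix I) OBC.
exact: affix_neq0.
Qed.

Lemma on_line_origin_conj (I O P : point) (s1 s2 : C) : O <> I -> on_line I O P ->
  cconj (affix I O) * s2 = affix I O * s1 -> cconj (affix I P) * s2 = affix I P * s1.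
Proof.
move=> OI /(collinear_affix I); rewrite affix_origin !subr0 => OP axis.
by apply: (mulfI (affix_neq0 OI)); rewrite mulrA -OP mulrAC axis; ring.
Qed.

Section PedalTrianglePoints.
Variables (I P A' B' C' : point) (ea eb ec : C).
Hypotheses (PI : P <> I) (ua : on_unit_circle ea) (ub : on_unit_circle eb)
  (uc : on_unit_circle ec) (eab : ea != eb) (ebc : eb != ec) (eca : ec != ea).
Local Notation p := (affix I P).
Hypotheses (hA : affix I A' = pedal p ea) (hB : affix I B' = pedal p eb)
  (hC : affix I C' = pedal p ec).

Let p0 : p != 0 := affix_neq0 PI.

Let affix_mirror X Y ex ey : on_unit_circle ex -> on_unit_circle ey -> ex != ey ->
  affix I X = pedal p ex -> affix I Y = pedal p ey ->
  affix I (reflection P X Y) = pedal_mirror p ex ey.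
Proof.
move=> ux uy exy hX hY.
have cp0 : cconj p != 0 by rewrite fmorph_eq0.
have XY : X <> Y.
  move=> E; move: exy; have := hX; rewrite E hY /pedal.
  by move=> /(mulIf (invr_neq0 (natC_neq0 1))) /addrI /(mulfI cp0) ->; rewrite eqxx.
by rewrite affix_reflection // hX hY pedal_mirrorE.
Qed.

Lemma pedal_triangle_steiner_euler O' :
  let sigma1 := ea + eb + ec in let sigma2 := ea * eb + eb * ec + ec * ea in
  sigma1 != 0 -> sigma2 != 0 -> cconj p * sigma2 = p * sigma1 ->
  is_circumcenter O' A' B' C' ->
  let G := centroid A' B' C' in
  let Ra := reflection P B' C' in
  let Rb := reflection P C' A' in
  let Rc := reflection P A' B' in
  [/\ O' <> G, on_line O' G Ra, on_line O' G Rb, on_line O' G Rc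
    & ~ (Ra = Rb /\ Rb = Rc)].
Proof.
move=> s1 s2 s10 s20 hp [OA OB] G Ra Rb Rc.
have hO : affix I O' = p / 2.
  apply: (pedal_circumcenter p0 ua ub uc eab ebc eca); rewrite -?hA -?hB -?hC -!(sqdist_affix I).
    by rewrite OA.
  by rewrite OB.
have hG : affix I G = p / 2 + cconj p * s1 / 6.
  by rewrite affix_centroid hA hB hC /pedal /s1; field; rewrite !natC_neq0.
have hRa : affix I Ra = pedal_mirror p eb ec := affix_mirror ub uc ebc hB hC.
have hRb : affix I Rb = pedal_mirror p ec ea := affix_mirror uc ua eca hC hA.
have hRc : affix I Rc = pedal_mirror p ea eb := affix_mirror ua ub eab hA hB.
have euler X ex ey ez : on_unit_circle ex -> on_unit_circle ey -> on_unit_circle ez ->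
    s1 = ex + ey + ez -> s2 = ex * ey + ey * ez + ez * ex ->
    affix I X = pedal_mirror p ey ez -> on_line O' G X.
  move=> ux uy uz h1 h2 hX; apply/(collinear_affix I); rewrite hO hG hX.
  exact: (pedal_mirror_on_euler_line p0 ux uy uz h1 h2 s10 s20 hp).
split.
- move=> E; have : affix I G - affix I O' = cconj p * s1 / 6 by rewrite hG hO addrC addKr.
  rewrite E subrr => /esym/eqP; rewrite !mulf_eq0 fmorph_eq0 (negPf p0) (negPf s10) /=.
  by rewrite invr_eq0 (negPf (natC_neq0 5)).
- exact: euler ua ub uc erefl erefl hRa.
- by apply: euler ub uc ua _ _ hRb; rewrite /s1 /s2; ring.
- by apply: euler uc ua ub _ _ hRc; rewrite /s1 /s2; ring.
case=> E1 E2; apply: (pedal_reflections_not_all_equal p0 eab ebc eca).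
by rewrite -hRa -hRb -hRc E1 E2.
Qed.

End PedalTrianglePoints.

End Points.

Theorem proposition3p1 (R : realFieldType) (A B C I O P O' : point R) :
  ~ collinear A B C ->
  is_incenter I A B C ->
  is_circumcenter O A B C ->
  I <> O ->
  on_line I O P ->
  P <> I ->
  let A' := foot P A I in
  let B' := foot P B I in
  let C' := foot P C I in
  is_circumcenter O' A' B' C' ->
  let G := centroid A' B' C' in
  let Ra := reflection P B' C' in
  let Rb := reflection P C' A' in
  let Rc := reflection P A' B' in
  [/\ O' <> G, on_line O' G Ra, on_line O' G Rb, on_line O' G Rc
    & ~ (Ra = Rb /\ Rb = Rc)].
Proof.
move=> ABC inc circ OI IOP PI A' B' C' circ'.
have [[AI BI CI] [eab ebc eca] [s10 s20 axis]] :=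
  incenter_circumcenter_axis ABC inc circ (nesym OI).
have unit X : X <> I -> on_unit_circle (phase (affix I X)).
  by move=> XI; apply/phase_on_unit_circle/affix_neq0.
exact: (pedal_triangle_steiner_euler PI (unit A AI) (unit B BI) (unit C CI) eab ebc eca
  (affix_foot_origin P AI) (affix_foot_origin P BI) (affix_foot_origin P CI) s10 s20
  (on_line_origin_conj (nesym OI) IOP axis) circ').
Qed.
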